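(* The family of power-divergence copulas is negatively ordered: if $-\infty<\lambda_1<\lambda_2<\infty$, then $C_{\lambda_1}(u_1,u_2)\ge C_{\lambda_2}(u_1,u_2)$ for all $u_1,u_2\in[0,1]$.
   Context: For $\lambda\in\mathbb{R}$ define $\phi_\lambda$ on $[0,\infty)$ by $\phi_\lambda(x)=\frac{1}{\lambda(\lambda+1)}(x^{\lambda+1}-x+\lambda(1-x))$ for $\lambda\neq-1,0$; $\phi_0(x)=1-x+x\log x$; $\phi_{-1}(x)=x-1-\log x$; values at $x=0$ are limits, so $\phi_\lambda(0)=1/(\lambda+1)$ for $\lambda>-1$ and $\phi_\lambda(0)=\infty$ for $\lambda\le-1$. On $[0,1]$, $\phi_\lambda$ is convex, strictly decreasing, $\phi_\lambda(1)=0$. The pseudoinverse is $\phi_\lambda^{[-1]}(t)=\phi_\lambda^{-1}(t)$ (inverse of $\phi_\lambda|_{[0,1]}$) for $0\le t<\phi_\lambda(0)$ and $0$ for $t\ge\phi_\lambda(0)$. The power-divergence (PD) copula is $C_\lambda(u_1,u_2)=\phi_\lambda^{[-1]}(\phi_\lambda(u_1)+\phi_\lambda(u_2))$, $u_1,u_2\in[0,1]$ (with $\phi_\lambda^{[-1]}(\infty)=0$). *)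

From Stdlib Require Import Reals Lra Classical ClassicalEpsilon.
From Coquelicot Require Import Coquelicot.
Open Scope R_scope.

Definition phi_pos (lam x : R) : R :=
  if Req_EM_T lam 0 then 1 - x + x * ln x
  else if Req_EM_T lam (-1) then x - 1 - ln x
  else / (lam * (lam + 1)) * (Rpower x (lam + 1) - x + lam * (1 - x)).

(* phi_lambda on [0, infinity), with value at 0 given by the limit:
   1/(lam+1) if lam > -1, +infinity if lam <= -1. *)
Definition phi (lam x : R) : Rbar :=
  if Rlt_dec 0 x then Finite (phi_pos lam x)
  else if Rlt_dec (-1) lam then Finite (/ (lam + 1)) else p_infty.

(* inverse of phi_lambda restricted to [0,1], evaluated at t
   (a chosen x in [0,1] with phi lam x = t, when one exists; unique since
   phi_lambda is strictly decreasing on [0,1]). *)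
Definition phi_inv (lam t : R) : R :=
  match excluded_middle_informative
          (exists x, 0 <= x <= 1 /\ phi lam x = Finite t) with
  | left H => proj1_sig (constructive_indefinite_description _ H)
  | right _ => 0
  end.

Definition phi_pinv (lam : R) (t : Rbar) : R :=
  match t with
  | Finite r => if Rbar_lt_dec (Finite r) (phi lam 0) then phi_inv lam r else 0
  | _ => 0
  end.

Definition PD_copula (lam u1 u2 : R) : R :=
  phi_pinv lam (Rbar_plus (phi lam u1) (phi lam u2)).

(** For [a < b] the ratio [phi_a / phi_b] is nonincreasing on [(0, 1)]: the
    combination [h = phi_a(c) phi_b - phi_b(c) phi_a] vanishes at [c] and, to
    second order, at [1], while [h'' = x^(a-1) (phi_a(c) x^(b-a) - phi_b(c))]
    changes sign at most once, from negative to positive; hence [h >= 0] on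
    [[c, 1]].  Now let [x = C_b(u1, u2) > 0], so that
    [phi_b(x) = phi_b(u1) + phi_b(u2)] and [x <= u1, u2].  Monotonicity of the
    ratio gives [phi_a(u1) + phi_a(u2) <= phi_a(x)], and since [phi_a] is
    decreasing this means [C_a(u1, u2) >= x]. *)

From Stdlib Require Import Reals Lra ClassicalEpsilon.
From Coquelicot Require Import Coquelicot.
Open Scope R_scope.

Definition phi_pos_der (lam x : R) : R :=
  if Req_EM_T lam 0 then ln x else (Rpower x lam - 1) / lam.

Definition phi_pos_der2 (lam x : R) : R := Rpower x lam / x.

Lemma derivable_pt_lim_phi_pos lam x :
  0 < x -> derivable_pt_lim (phi_pos lam) x (phi_pos_der lam x).
Proof.
  intro Hx; apply is_derive_Reals; unfold phi_pos, phi_pos_der, Rpower.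
  destruct (Req_EM_T lam 0) as [H0|H0].
  - auto_derive; [lra|]. field; lra.
  - destruct (Req_EM_T lam (-1)) as [H1|H1].
    + subst; auto_derive; [lra|].
      replace (-1 * ln x) with (- ln x) by ring.
      rewrite exp_Ropp, exp_ln by lra. field; lra.
    + auto_derive; [lra|].
      replace ((lam + 1) * ln x) with (lam * ln x + ln x) by ring.
      rewrite exp_plus, exp_ln by lra.
      field; repeat split; intro; [lra | apply H0; lra | apply H1; lra].
Qed.

Lemma derivable_pt_lim_phi_pos_der lam x :
  0 < x -> derivable_pt_lim (phi_pos_der lam) x (phi_pos_der2 lam x).
Proof.
  intro Hx; apply is_derive_Reals; unfold phi_pos_der, phi_pos_der2, Rpower.
  destruct (Req_EM_T lam 0) as [H0|H0].
  - subst; auto_derive; [lra|]. rewrite Rmult_0_l, exp_0. field; lra.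
  - auto_derive; [lra|]. field; lra.
Qed.

Lemma continuity_pt_phi_pos lam x : 0 < x -> continuity_pt (phi_pos lam) x.
Proof.
  intro Hx; apply derivable_continuous_pt.
  exists (phi_pos_der lam x); exact (derivable_pt_lim_phi_pos lam x Hx).
Qed.

Lemma phi_pos_1 lam : phi_pos lam 1 = 0.
Proof.
  unfold phi_pos, Rpower; rewrite ln_1.
  destruct (Req_EM_T lam 0); [ring|].
  destruct (Req_EM_T lam (-1)); [ring|].
  rewrite Rmult_0_r, exp_0; ring.
Qed.

Lemma phi_pos_der_1 lam : phi_pos_der lam 1 = 0.
Proof.
  unfold phi_pos_der, Rpower; rewrite ln_1.
  destruct (Req_EM_T lam 0); [reflexivity|].
  rewrite Rmult_0_r, exp_0; field; assumption.
Qed.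

Lemma ln_lt_0 x : 0 < x < 1 -> ln x < 0.
Proof. intro Hx; rewrite <- ln_1; apply ln_increasing; lra. Qed.

Lemma phi_pos_der_lt_0 lam x : 0 < x < 1 -> phi_pos_der lam x < 0.
Proof.
  intro Hx; pose proof (ln_lt_0 x Hx).
  unfold phi_pos_der, Rpower, Rdiv; destruct (Req_EM_T lam 0); [lra|].
  destruct (Rlt_dec 0 lam).
  - assert (exp (lam * ln x) < 1) by (rewrite <- exp_0; apply exp_increasing; nra).
    assert (0 < / lam) by (apply Rinv_0_lt_compat; lra). nra.
  - assert (1 < exp (lam * ln x)) by (rewrite <- exp_0; apply exp_increasing; nra).
    assert (/ lam < 0) by (apply Rinv_lt_0_compat; lra). nra.
Qed.

Lemma phi_pos_decreasing lam x y :
  0 < x -> x < y -> y <= 1 -> phi_pos lam y < phi_pos lam x.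
Proof.
  intros Hx Hxy Hy.
  destruct (MVT_cor2 (phi_pos lam) (phi_pos_der lam) x y Hxy) as [c [Hc Hcxy]].
  - intros c Hc; apply derivable_pt_lim_phi_pos; lra.
  - assert (phi_pos_der lam c < 0) by (apply phi_pos_der_lt_0; lra). nra.
Qed.

Lemma phi_pos_le_inv lam x y :
  0 < x -> y <= 1 -> phi_pos lam x <= phi_pos lam y -> y <= x.
Proof.
  intros Hx Hy Hle; apply Rnot_lt_le; intro Hxy.
  pose proof (phi_pos_decreasing lam x y Hx Hxy Hy); lra.
Qed.

Lemma phi_pos_gt_0 lam x : 0 < x < 1 -> 0 < phi_pos lam x.
Proof. intro Hx; rewrite <- (phi_pos_1 lam); apply phi_pos_decreasing; lra. Qed.

Lemma phi_pos_ge_0 lam x : 0 < x <= 1 -> 0 <= phi_pos lam x.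
Proof.
  intro Hx; destruct (Req_dec x 1) as [->|]; [rewrite phi_pos_1; lra|].
  left; apply phi_pos_gt_0; lra.
Qed.

Lemma phi_pos_lt_phi_0 lam x :
  -1 < lam -> 0 < x <= 1 -> phi_pos lam x < / (lam + 1).
Proof.
  intros Hl Hx; unfold phi_pos, Rpower.
  assert (ln x <= 0).
  { destruct (Req_dec x 1) as [->|]; [rewrite ln_1; lra|].
    left; apply ln_lt_0; lra. }
  destruct (Req_EM_T lam 0) as [H0|H0].
  { subst; rewrite Rplus_0_l, Rinv_1; nra. }
  destruct (Req_EM_T lam (-1)) as [H1|H1]; [lra|].
  replace ((lam + 1) * ln x) with (lam * ln x + ln x) by ring.
  rewrite exp_plus, exp_ln by lra.
  set (E := exp (lam * ln x)).
  replace (/ (lam * (lam + 1)) * (E * x - x + lam * (1 - x)))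
    with (/ (lam + 1) * ((E * x - x + lam * (1 - x)) / lam)) by (field; lra).
  assert (0 < / (lam + 1)) by (apply Rinv_0_lt_compat; lra).
  cut ((E * x - x + lam * (1 - x)) / lam < 1); [intro; nra|].
  destruct (Rlt_dec 0 lam).
  - assert (E <= 1).
    { unfold E; rewrite <- exp_0.
      destruct (Req_dec (lam * ln x) 0) as [->|]; [lra|].
      left; apply exp_increasing; nra. }
    apply (Rmult_lt_reg_r lam); [lra|].
    unfold Rdiv; rewrite Rmult_assoc, Rinv_l by lra. nra.
  - assert (1 <= E).
    { unfold E; rewrite <- exp_0.
      destruct (Req_dec (lam * ln x) 0) as [->|]; [lra|].
      left; apply exp_increasing; nra. }
    apply (Rmult_lt_reg_r (- lam)); [lra|].
    replace ((E * x - x + lam * (1 - x)) / lam * - lam)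
      with (-(E * x - x + lam * (1 - x))) by (field; lra).
    nra.
Qed.

Lemma nonneg_of_single_crossing_deriv2 (h h' h'' : R -> R) (c d : R) :
  c < d ->
  (forall x, c <= x <= d -> derivable_pt_lim h x (h' x)) ->
  (forall x, c <= x <= d -> derivable_pt_lim h' x (h'' x)) ->
  (forall x y, c < x -> x < y -> y < d -> 0 < h'' x -> 0 < h'' y) ->
  h c = 0 -> h d = 0 -> h' d = 0 ->
  forall u, c <= u <= d -> 0 <= h u.
Proof.
  intros Hcd Dh Dh' Hcross Hc Hd Hd' u Hu.
  destruct (Req_dec u c) as [->|Huc]; [lra|].
  destruct (Req_dec u d) as [->|Hud]; [lra|].
  apply Rnot_lt_le; intro Hneg.
  destruct (MVT_cor2 h h' c u) as [x1 [E1 R1]];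
    [lra | intros; apply Dh; lra |].
  destruct (MVT_cor2 h h' u d) as [x2 [E2 R2]];
    [lra | intros; apply Dh; lra |].
  assert (h' x1 < 0) by nra.
  assert (0 < h' x2) by nra.
  destruct (MVT_cor2 h' h'' x1 x2) as [x3 [E3 R3]];
    [lra | intros; apply Dh'; lra |].
  destruct (MVT_cor2 h' h'' x2 d) as [x4 [E4 R4]];
    [lra | intros; apply Dh'; lra |].
  assert (0 < h'' x3) by nra.
  assert (h'' x4 < 0) by nra.
  assert (0 < h'' x4) by (apply (Hcross x3 x4); lra).
  lra.
Qed.

(* [K1 x^b / x - K2 x^a / x = (x^a / x) (K1 x^(b-a) - K2)], and the second
   factor is increasing in [x]. *)
Lemma phi_pos_der2_comb_single_crossing a b K1 K2 x y :
  a < b -> 0 < K1 -> 0 < x -> x < y ->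
  0 < K1 * phi_pos_der2 b x - K2 * phi_pos_der2 a x ->
  0 < K1 * phi_pos_der2 b y - K2 * phi_pos_der2 a y.
Proof.
  intros Hab HK Hx Hxy H; unfold phi_pos_der2, Rpower in *.
  assert (E : forall z, 0 < z ->
      K1 * (exp (b * ln z) / z) - K2 * (exp (a * ln z) / z)
      = exp (a * ln z) / z * (K1 * exp ((b - a) * ln z) - K2)).
  { intros z Hz; replace (b * ln z) with (a * ln z + (b - a) * ln z) by ring.
    rewrite exp_plus; field; lra. }
  rewrite E in H by lra; rewrite E by lra.
  assert (0 < exp (a * ln x) / x) by (apply Rdiv_lt_0_compat; [apply exp_pos | lra]).
  assert (0 < exp (a * ln y) / y) by (apply Rdiv_lt_0_compat; [apply exp_pos | lra]).
  assert (0 < K1 * exp ((b - a) * ln x) - K2)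
    by (apply (Rmult_lt_reg_l (exp (a * ln x) / x)); lra).
  assert (exp ((b - a) * ln x) < exp ((b - a) * ln y)).
  { apply exp_increasing, Rmult_lt_compat_l; [lra|].
    apply ln_increasing; lra. }
  apply Rmult_lt_0_compat; [lra | nra].
Qed.

Lemma phi_pos_ratio_antitone a b c u :
  a < b -> 0 < c -> c <= u -> u <= 1 ->
  phi_pos b c * phi_pos a u <= phi_pos b u * phi_pos a c.
Proof.
  intros Hab Hc Hcu Hu.
  destruct (Req_dec c 1) as [->|Hc1].
  { replace u with 1 by lra; rewrite !phi_pos_1; lra. }
  set (K1 := phi_pos a c); set (K2 := phi_pos b c).
  assert (HK1 : 0 < K1) by (apply phi_pos_gt_0; lra).
  cut (0 <= K1 * phi_pos b u - K2 * phi_pos a u); [lra|].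
  apply (nonneg_of_single_crossing_deriv2
    (fun x => K1 * phi_pos b x - K2 * phi_pos a x)
    (fun x => K1 * phi_pos_der b x - K2 * phi_pos_der a x)
    (fun x => K1 * phi_pos_der2 b x - K2 * phi_pos_der2 a x) c 1); try lra.
  - intros x Hx.
    apply (derivable_pt_lim_minus (mult_real_fct K1 (phi_pos b))
             (mult_real_fct K2 (phi_pos a)));
      apply derivable_pt_lim_scal, derivable_pt_lim_phi_pos; lra.
  - intros x Hx.
    apply (derivable_pt_lim_minus (mult_real_fct K1 (phi_pos_der b))
             (mult_real_fct K2 (phi_pos_der a)));
      apply derivable_pt_lim_scal, derivable_pt_lim_phi_pos_der; lra.
  - intros x y Hx Hxy _; apply phi_pos_der2_comb_single_crossing; lra.
  - unfold K1, K2; ring.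
  - rewrite !phi_pos_1; ring.
  - rewrite !phi_pos_der_1; ring.
Qed.

Lemma phi_pos_sum_le a b x u1 u2 :
  a < b -> 0 < x <= 1 -> 0 < u1 <= 1 -> 0 < u2 <= 1 ->
  phi_pos b x = phi_pos b u1 + phi_pos b u2 ->
  phi_pos a u1 + phi_pos a u2 <= phi_pos a x.
Proof.
  intros Hab Hx Hu1 Hu2 Hsum.
  pose proof (phi_pos_ge_0 b u1 Hu1); pose proof (phi_pos_ge_0 b u2 Hu2).
  assert (x <= u1) by (apply (phi_pos_le_inv b); lra).
  assert (x <= u2) by (apply (phi_pos_le_inv b); lra).
  destruct (Req_dec x 1) as [->|Hx1].
  { replace u1 with 1 by lra; replace u2 with 1 by lra.
    rewrite !phi_pos_1; lra. }
  pose proof (phi_pos_ratio_antitone a b x u1 Hab (proj1 Hx) ltac:(lra) ltac:(lra)).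
  pose proof (phi_pos_ratio_antitone a b x u2 Hab (proj1 Hx) ltac:(lra) ltac:(lra)).
  assert (0 < phi_pos b x) by (apply phi_pos_gt_0; lra).
  apply (Rmult_le_reg_l (phi_pos b x)); [lra|].
  rewrite Hsum at 2; nra.
Qed.

Lemma phi_pos_onto lam x s :
  0 < x <= 1 -> 0 <= s <= phi_pos lam x ->
  exists y, x <= y <= 1 /\ phi_pos lam y = s.
Proof.
  intros Hx Hs.
  destruct (Req_dec s (phi_pos lam x)) as [->|Hsx]; [exists x; split; lra|].
  destruct (Req_dec s 0) as [->|Hs0]; [exists 1; rewrite phi_pos_1; split; lra|].
  destruct (Req_dec x 1) as [->|Hx1]; [rewrite phi_pos_1 in Hs; lra|].
  destruct (Ranalysis5.IVT_interv (fun z => s - phi_pos lam z) x 1)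
    as [y [Hy Hsy]]; try lra.
  - intros z Hz; apply continuity_pt_minus;
      [apply continuity_pt_const; intros ? ?; reflexivity |].
    apply continuity_pt_phi_pos; lra.
  - rewrite phi_pos_1; lra.
  - exists y; split; lra.
Qed.

Lemma phi_gt_0 lam x : 0 < x -> phi lam x = Finite (phi_pos lam x).
Proof. intro Hx; unfold phi; destruct (Rlt_dec 0 x); [reflexivity | lra]. Qed.

Lemma phi_finite_ge_0_or_infty lam u : 0 <= u <= 1 ->
  phi lam u = p_infty \/ exists p, phi lam u = Finite p /\ 0 <= p.
Proof.
  intro Hu; destruct (Req_dec u 0) as [->|Hu0].
  - unfold phi; destruct (Rlt_dec 0 0); [lra|].
    destruct (Rlt_dec (-1) lam); [|left; reflexivity].
    right; eexists; split; [reflexivity|].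
    left; apply Rinv_0_lt_compat; lra.
  - right; exists (phi_pos lam u); split; [apply phi_gt_0; lra|].
    apply phi_pos_ge_0; lra.
Qed.

Lemma phi_inv_spec lam t :
  (exists x, 0 <= x <= 1 /\ phi lam x = Finite t) ->
  0 <= phi_inv lam t <= 1 /\ phi lam (phi_inv lam t) = Finite t.
Proof.
  intro H; unfold phi_inv.
  destruct excluded_middle_informative as [H'|]; [|contradiction].
  destruct constructive_indefinite_description as [x Hx]; exact Hx.
Qed.

Lemma phi_inv_ge_0 lam t : 0 <= phi_inv lam t.
Proof.
  unfold phi_inv; destruct excluded_middle_informative; [|lra].
  destruct constructive_indefinite_description as [x Hx]; simpl; lra.
Qed.

Lemma PD_copula_ge_0 lam u1 u2 : 0 <= PD_copula lam u1 u2.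
Proof.
  unfold PD_copula, phi_pinv; destruct (Rbar_plus _ _); try lra.
  destruct (Rbar_lt_dec _ _); [apply phi_inv_ge_0 | lra].
Qed.

Lemma PD_copula_0_or_gt_0 lam u1 u2 : 0 <= u1 <= 1 -> 0 <= u2 <= 1 ->
  PD_copula lam u1 u2 = 0 \/
  (0 < u1 /\ 0 < u2 /\ 0 < PD_copula lam u1 u2 <= 1 /\
   phi_pos lam (PD_copula lam u1 u2) = phi_pos lam u1 + phi_pos lam u2).
Proof.
  intros Hu1 Hu2; unfold PD_copula, phi_pinv.
  destruct (phi_finite_ge_0_or_infty lam u1 Hu1) as [P1|[p1 [P1 Q1]]];
  destruct (phi_finite_ge_0_or_infty lam u2 Hu2) as [P2|[p2 [P2 Q2]]];
    rewrite P1, P2; simpl; try (left; reflexivity).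
  destruct (Rbar_lt_dec (Finite (p1 + p2)) (phi lam 0)) as [Hlt|];
    [|left; reflexivity].
  unfold phi_inv; destruct excluded_middle_informative; [|left; reflexivity].
  destruct constructive_indefinite_description as [x [Hx Hpx]]; simpl.
  destruct (Req_dec x 0) as [->|Hx0]; [left; reflexivity | right].
  assert (0 < u1).
  { destruct (Req_dec u1 0) as [->|]; [|lra]. rewrite P1 in Hlt; simpl in Hlt; lra. }
  assert (0 < u2).
  { destruct (Req_dec u2 0) as [->|]; [|lra]. rewrite P2 in Hlt; simpl in Hlt; lra. }
  rewrite phi_gt_0 in P1, P2, Hpx by lra.
  injection P1; injection P2; injection Hpx; intros; repeat split; lra.
Qed.

Lemma PD_copula_ge lam x u1 u2 :
  0 < x <= 1 -> 0 < u1 <= 1 -> 0 < u2 <= 1 ->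
  phi_pos lam u1 + phi_pos lam u2 <= phi_pos lam x ->
  x <= PD_copula lam u1 u2.
Proof.
  intros Hx Hu1 Hu2 Hle.
  set (s := phi_pos lam u1 + phi_pos lam u2) in *.
  assert (0 <= s)
    by (pose proof (phi_pos_ge_0 lam u1 Hu1); pose proof (phi_pos_ge_0 lam u2 Hu2);
        unfold s; lra).
  unfold PD_copula, phi_pinv; rewrite (phi_gt_0 lam u1), (phi_gt_0 lam u2) by lra.
  simpl; fold s.
  destruct (Rbar_lt_dec (Finite s) (phi lam 0)) as [Hlt|Hnlt].
  - destruct (phi_inv_spec lam s) as [Hy Hys].
    { destruct (phi_pos_onto lam x s) as [y [Hy Hys]]; [lra | lra |].
      exists y; split; [lra|]; rewrite phi_gt_0 by lra; congruence. }
    destruct (Req_dec (phi_inv lam s) 0) as [E|E].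
    { rewrite E in Hys; rewrite Hys in Hlt; simpl in Hlt; lra. }
    rewrite phi_gt_0 in Hys by lra; injection Hys; intro Hs.
    apply (phi_pos_le_inv lam); lra.
  - exfalso; apply Hnlt; unfold phi.
    destruct (Rlt_dec 0 0); [lra|].
    destruct (Rlt_dec (-1) lam) as [Hl|]; simpl; [|exact I].
    pose proof (phi_pos_lt_phi_0 lam x Hl Hx); lra.
Qed.

Theorem theorem3 (lam1 lam2 u1 u2 : R) :
  lam1 < lam2 -> 0 <= u1 <= 1 -> 0 <= u2 <= 1 ->
  PD_copula lam1 u1 u2 >= PD_copula lam2 u1 u2.
Proof.
  intros Hl Hu1 Hu2; apply Rle_ge.
  destruct (PD_copula_0_or_gt_0 lam2 u1 u2 Hu1 Hu2)
    as [-> | [Hu1' [Hu2' [Hx Hsum]]]].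
  - apply PD_copula_ge_0.
  - apply PD_copula_ge; try lra.
    apply (phi_pos_sum_le lam1 lam2); lra.
Qed.
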